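(* Let $0\to\mathcal H_{\mathcal Q}\xrightarrow{inc}\mathcal E_{\mathcal R}\xrightarrow{proj}\mathcal L_{\mathcal N}\to0$ be a non-abelian extension of Nijenhuis Lie conformal algebras. Then the sequence $$1\longrightarrow\mathrm{Aut}^{\mathcal L,\mathcal H}_{\mathcal H}(\mathcal E_{\mathcal R})\xrightarrow{inc}\mathrm{Aut}_{\mathcal H}(\mathcal E_{\mathcal R})\xrightarrow{\Pi}\mathrm{Aut}(\mathcal H_{\mathcal Q})\times\mathrm{Aut}(\mathcal L_{\mathcal N})\xrightarrow{\mathfrak W}H^2_{nab}(\mathcal L_{\mathcal N},\mathcal H_{\mathcal Q})$$ is exact.
   Context: All spaces over $\mathbb C$. A Lie conformal algebra is a $\mathbb C[\partial]$-module with a $\mathbb C$-bilinear $\lambda$-bracket satisfying $[\partial a_\lambda b]=-\lambda[a_\lambda b]$, $[a_\lambda\partial b]=(\partial+\lambda)[a_\lambda b]$, $[a_\lambda b]=-[b_{-\partial-\lambda}a]$, $[a_\lambda[b_\mu c]]=[[a_\lambda b]_{\lambda+\mu}c]+[b_\mu[a_\lambda c]]$. A Nijenhuis operator is a $\mathbb C[\partial]$-linear $\mathcal N$ with $[\mathcal N(p)_\lambda\mathcal N(q)]=\mathcal N([\mathcal N(p)_\lambda q]+[p_\lambda\mathcal N(q)]-\mathcal N([p_\lambda q]))$; Nijenhuis Lie conformal algebras $\mathcal L_{\mathcal N}=(\mathcal L,[\cdot_\lambda\cdot]_{\mathcal L},\mathcal N)$, $\mathcal H_{\mathcal Q}=(\mathcal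 H,[\cdot_\lambda\cdot]_{\mathcal H},\mathcal Q)$, $\mathcal E_{\mathcal R}=(\mathcal E,[\cdot_\lambda\cdot]_{\mathcal E},\mathcal R)$ are Lie conformal algebras with Nijenhuis operators; morphisms are bracket-preserving $\mathbb C[\partial]$-linear maps intertwining the operators; $\mathrm{Aut}$ denotes bijective self-morphisms. A non-abelian extension is a short exact sequence of such morphisms as displayed, split as $\mathbb C[\partial]$-modules, with $\mathcal H\subset\mathcal E$ and $\mathcal R|_{\mathcal H}=\mathcal Q$; fix a $\mathbb C[\partial]$-linear section $s$ of $proj$ and the induced $\chi_\lambda(p,q)=[s(p)_\lambda s(q)]_{\mathcal E}-s([p_\lambda q]_{\mathcal L})$, $\rho(p)_\lambda h=[s(p)_\lambda h]_{\mathcal E}$, $\Phi(p)=\mathcal R(s(p))-s(\mathcal N(p))$. Non-abelian $2$-cocycles: triples $(\chi_\lambda:\mathcal L\otimes\mathcal L\to\mathcal H[\lambda],\rho:\mathcal L\otimes\mathcal H\to\mathcal H[\lambda],\Phi:\mathcal L\to\mathcal H)$ with (i) $\rho(p)_\lambda\rho(q)_\mu h-\rho(q)_\mu\rho(p)_\lambda h-\rho([p_\lambda q]_{\mathcal L})_{\lambda+\mu}h=[\chi_\lambda(p,q)_{\lambda+\mu}h]_{\mathcal H}$; (ii) $\rho(p)_\lambda\chi_\mu(q,r)+\rho(q)_\mu\chi_\lambda(r,p)+\rho(r)_{-\partial-\lambda-\mu}\chi_\lambda(p,q)-\chi_{\lambda+\mu}([q_\mu r]_{\mathcal L},p)-\chi_{\lambda+\mu}([r_{-\partial-\lambda}p]_{\mathcal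 L},q)-\chi_{\lambda+\mu}([p_\lambda q]_{\mathcal L},r)=0$; (iii) $\rho(\mathcal Np)_\lambda\mathcal Q(h)=\mathcal Q(\rho(\mathcal Np)_\lambda h+\rho(p)_\lambda\mathcal Q(h)-\mathcal Q(\rho(p)_\lambda h))+\mathcal Q([\Phi(p)_\lambda h]_{\mathcal H})-[\Phi(p)_\lambda\mathcal Q(h)]_{\mathcal H}$; (iv) $\chi_\lambda(\mathcal Np,\mathcal Nq)-\mathcal Q(\chi_\lambda(\mathcal Np,q)+\chi_\lambda(p,\mathcal Nq)-\mathcal Q\chi_\lambda(p,q))-\Phi([\mathcal N(p)_\lambda q]_{\mathcal L}+[p_\lambda\mathcal N(q)]_{\mathcal L}-\mathcal N[p_\lambda q]_{\mathcal L})+\rho(\mathcal Np)_\lambda\Phi(q)-\rho(\mathcal Nq)_{-\partial-\lambda}\Phi(p)+\mathcal Q(\rho(q)_{-\partial-\lambda}\Phi(p)-\rho(p)_\lambda\Phi(q)+\Phi([p_\lambda q]_{\mathcal L}))+[\Phi(p)_\lambda\Phi(q)]_{\mathcal H}=0$, for all $p,q,r\in\mathcal L$, $h\in\mathcal H$. Equivalence via a linear $\tau:\mathcal L\to\mathcal H$: $\rho(p)_\lambda h-\rho'(p)_\lambda h=[\tau(p)_\lambda h]_{\mathcal H}$, $\chi_\lambda(p,q)-\chi'_\lambda(p,q)=[\tau(p)_\lambda\tau(q)]_{\mathcal H}-\tau([p_\lambda q]_{\mathcal L})+\rho'(p)_\lambda\tau(q)-\rho'(q)_{-\partial-\lambda}\tau(p)$,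 $\Phi(p)-\Phi'(p)=\mathcal Q\tau(p)-\tau\mathcal N(p)$; $H^2_{nab}(\mathcal L_{\mathcal N},\mathcal H_{\mathcal Q})$ = equivalence classes. $\mathrm{Aut}_{\mathcal H}(\mathcal E_{\mathcal R})=\{\gamma\in\mathrm{Aut}(\mathcal E_{\mathcal R}):\gamma(\mathcal H)=\mathcal H\}$; $\Pi(\gamma)=(\gamma|_{\mathcal H},proj\circ\gamma\circ s)$; $\mathrm{Aut}^{\mathcal L,\mathcal H}_{\mathcal H}(\mathcal E_{\mathcal R})=\{\gamma\in\mathrm{Aut}_{\mathcal H}(\mathcal E_{\mathcal R}):\Pi(\gamma)=(\mathrm{Id}_{\mathcal H},\mathrm{Id}_{\mathcal L})\}$ with its inclusion $inc$. The Wells map is $\mathfrak W(\alpha,\beta)=[(\chi^{(\alpha,\beta)}_\lambda,\rho^{(\alpha,\beta)},\Phi^{(\alpha,\beta)})-(\chi_\lambda,\rho,\Phi)]$ where $\chi^{(\alpha,\beta)}_\lambda(p,q)=\alpha\chi_\lambda(\beta^{-1}p,\beta^{-1}q)$, $\rho^{(\alpha,\beta)}(p)_\lambda h=\alpha(\rho(\beta^{-1}p)_\lambda\alpha^{-1}h)$, $\Phi^{(\alpha,\beta)}(p)=\alpha\Phi(\beta^{-1}p)$. Exactness at $\mathrm{Aut}(\mathcal H_{\mathcal Q})\times\mathrm{Aut}(\mathcal L_{\mathcal N})$ means: the image of $\Pi$ equals the set of pairs $(\alpha,\beta)$ at which $\mathfrak W$ is trivial, i.e. for which $(\chi^{(\alpha,\beta)}_\lambda,\rho^{(\alpha,\beta)},\Phi^{(\alpha,\beta)})$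 is equivalent to $(\chi_\lambda,\rho,\Phi)$; exactness at the other terms means $inc$ is injective and $\ker\Pi=\mathrm{Aut}^{\mathcal L,\mathcal H}_{\mathcal H}(\mathcal E_{\mathcal R})$. *)

(* Lie conformal algebras over an arbitrary field K
   (the paper works over C). *)
From HB Require Import structures.
From mathcomp Require Import all_boot all_order all_algebra.
Set Implicit Arguments. Unset Strict Implicit. Unset Printing Implicit Defensive.
Import GRing.Theory.
Local Open Scope ring_scope.

Section NijenhuisLCA.
Variable K : fieldType.

(* An element of V[λ] is represented by its list of coefficients
   [c_0; c_1; ...] meaning  Σ_n λ^n c_n ; equalities of polynomials are
   always stated coefficientwise (so trailing zeros are irrelevant). *)
Definition pco (V : lmodType K) (p : seq V) (n : nat) : V := nth 0 p n.

(* coefficient of λ^k in  p(-∂-λ) = Σ_n (-∂-λ)^n c_n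
   = Σ_n Σ_k C(n,k) (-λ)^k (-∂)^(n-k) c_n *)
Definition psubst (V : lmodType K) (d : V -> V) (p : seq V) (k : nat) : V :=
  \sum_(n < size p)
     ('C(n, k)%:R * (-1) ^+ k) *: iter (n - k) (fun x => - d x) (pco p n).

Record NLCA := {
  car :> lmodType K;
  der : car -> car;
  brk : car -> car -> seq car;   (* [a_λ b] as a polynomial in λ *)
  nij : car -> car }.

Definition lc (A : NLCA) (a b : A) (n : nat) : A := pco (brk a b) n.

Definition dlinear (V W : lmodType K) (dV : V -> V) (dW : W -> W) (f : V -> W) :=
  [/\ forall x y, f (x + y) = f x + f y,
      forall (k : K) x, f (k *: x) = k *: f x
    & forall x, f (dV x) = dW (f x)].

Definition is_LCA (A : NLCA) : Prop :=
  (forall x y : A, der (x + y) = der x + der y) /\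
  (forall (k : K) (x : A), der (k *: x) = k *: der x) /\
  (forall (a a' b : A) n, lc (a + a') b n = lc a b n + lc a' b n) /\
  (forall (k : K) (a b : A) n, lc (k *: a) b n = k *: lc a b n) /\
  (forall (a b b' : A) n, lc a (b + b') n = lc a b n + lc a b' n) /\
  (forall (k : K) (a b : A) n, lc a (k *: b) n = k *: lc a b n) /\
  (* [∂a_λ b] = -λ[a_λ b] *)
  (forall (a b : A) n,
      lc (der a) b n = - (if n is m.+1 then lc a b m else 0)) /\
  (* [a_λ ∂b] = (∂+λ)[a_λ b] *)
  (forall (a b : A) n,
      lc a (der b) n = der (lc a b n) + (if n is m.+1 then lc a b m else 0)) /\
  (* [a_λ b] = -[b_{-∂-λ} a] *)
  (forall (a b : A) k, lc a b k = - psubst (@der A) (brk b a) k) /\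
  (* [a_λ[b_μ c]] = [[a_λ b]_{λ+μ} c] + [b_μ[a_λ c]],
     compared at the coefficient of λ^p μ^q *)
  (forall (a b c : A) p q,
      lc a (lc b c q) p =
        \sum_(i < p.+1) 'C(p - i + q, q)%:R *: lc (lc a b i) c (p - i + q)
      + lc b (lc a c p) q).

Definition is_Nijenhuis (A : NLCA) : Prop :=
  dlinear (@der A) (@der A) (@nij A) /\
  forall (p q : A) n,
    lc (nij p) (nij q) n = nij (lc (nij p) q n + lc p (nij q) n - nij (lc p q n)).

Definition is_NLCA (A : NLCA) : Prop := is_LCA A /\ is_Nijenhuis A.

Definition nmorph (A B : NLCA) (f : A -> B) : Prop :=
  [/\ dlinear (@der A) (@der B) f,
      (forall (a b : A) n, f (lc a b n) = lc (f a) (f b) n)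
    & forall a : A, f (nij a) = nij (f a)].

Definition is_aut (A : NLCA) (alpha alphai : A -> A) : Prop :=
  [/\ nmorph alpha, cancel alpha alphai & cancel alphai alpha].

Section Extension.
Variables (H E L : NLCA) (inc : H -> E) (proj : E -> L) (s : L -> E).

Definition AutH (g : E -> E) : Prop :=
  [/\ nmorph g, bijective g,
      (forall h, exists h', g (inc h) = inc h')
    & (forall h', exists h, g (inc h) = inc h')].

Definition PiEq (g : E -> E) (alpha : H -> H) (beta : L -> L) : Prop :=
  (forall h, g (inc h) = inc (alpha h)) /\ (forall p, proj (g (s p)) = beta p).

Definition AutLH (g : E -> E) : Prop := AutH g /\ PiEq g id id.

End Extension.

(* Equivalence of (χ,ρ,Φ) and (χ',ρ',Φ') in the sense of non-abelian
   2-cocycles, witnessed by a C[∂]-linear τ : L -> H. *)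
Definition nab_equiv (H L : NLCA)
    (chi chi' : L -> L -> seq H) (rho rho' : L -> H -> seq H)
    (phi phi' : L -> H) : Prop :=
  exists tau : L -> H,
  [/\ dlinear (@der L) (@der H) tau,
      (forall p h n, pco (rho p h) n - pco (rho' p h) n = lc (tau p) h n),
      (forall p q n,
          pco (chi p q) n - pco (chi' p q) n =
            lc (tau p) (tau q) n - tau (lc p q n)
            + pco (rho' p (tau q)) n - psubst (@der H) (rho' q (tau p)) n)
    & (forall p, phi p - phi' p = nij (tau p) - tau (nij p))].

End NijenhuisLCA.

(* Via the section s every element of E is uniquely s p + inc h, so E_R is L (+) H with
   bracket and Nijenhuis operator twisted by (chi, rho, phi).  An automorphism g of E_R
   preserving H induces alpha = g|_H and beta = proj o g o s, automorphisms of H_Q and L_N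
   since g induces a map on E / H = L.  If Pi(g) = (alpha, beta), the H-component tau of
   g o s o beta^-1 measures how far g moves the section, and applying g to the identities
   defining chi, rho, phi shows that tau is an equivalence between the transported cocycle
   and (chi, rho, phi).  Conversely such a tau defines
   g (s p + inc h) = s (beta p) + inc (tau (beta p) + alpha h), an automorphism with
   Pi(g) = (alpha, beta): by bilinearity the bracket only has to be checked on pairs taken
   from s(L) and inc(H), where it is one of the identities of the equivalence. *)

From HB Require Import structures.
From mathcomp Require Import all_boot all_order all_algebra.
From Stdlib Require Import ClassicalEpsilon.
Set Implicit Arguments. Unset Strict Implicit. Unset Printing Implicit Defensive.
Import GRing.Theory.
Local Open Scope ring_scope.

Section DLinear.
Variables (K : fieldType) (V W : lmodType K) (dV : V -> V) (dW : W -> W).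
Variable f : V -> W.
Hypothesis f_dlin : dlinear dV dW f.

Lemma dlinearD x y : f (x + y) = f x + f y. Proof. by case: f_dlin. Qed.
Lemma dlinearZ k x : f (k *: x) = k *: f x. Proof. by case: f_dlin. Qed.
Lemma dlinear_der x : f (dV x) = dW (f x). Proof. by case: f_dlin. Qed.

Lemma dlinear0 : f 0 = 0.
Proof. by rewrite -(scale0r (0 : V)) dlinearZ scale0r. Qed.

Lemma dlinearN x : f (- x) = - f x.
Proof. by rewrite -scaleN1r dlinearZ scaleN1r. Qed.

Lemma dlinearB x y : f (x - y) = f x - f y.
Proof. by rewrite dlinearD dlinearN. Qed.

Lemma dlinear_iter_oppd m x :
  f (iter m (fun y => - dV y) x) = iter m (fun y => - dW y) (f x).
Proof. by elim: m => //= m <-; rewrite dlinearN dlinear_der. Qed.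

End DLinear.

Section DLinearClosure.
Variables (K : fieldType) (U V W : lmodType K) (dU : U -> U) (dV : V -> V) (dW : W -> W).

Lemma dlinear_comp (f : U -> V) (g : V -> W) :
  dlinear dU dV f -> dlinear dV dW g -> dlinear dU dW (g \o f).
Proof.
move=> f_dlin g_dlin; split=> [x y|k x|x] /=.
- by rewrite (dlinearD f_dlin) (dlinearD g_dlin).
- by rewrite (dlinearZ f_dlin) (dlinearZ g_dlin).
- by rewrite (dlinear_der f_dlin) (dlinear_der g_dlin).
Qed.

Lemma dlinear_add (f g : V -> W) : (forall x y, dW (x + y) = dW x + dW y) ->
  dlinear dV dW f -> dlinear dV dW g -> dlinear dV dW (fun x => f x + g x).
Proof.
move=> dWD f_dlin g_dlin; split=> [x y|k x|x].
- by rewrite (dlinearD f_dlin) (dlinearD g_dlin) addrACA.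
- by rewrite (dlinearZ f_dlin) (dlinearZ g_dlin) scalerDr.
- by rewrite (dlinear_der f_dlin) (dlinear_der g_dlin) dWD.
Qed.

End DLinearClosure.

Section Psubst.
Variables (K : fieldType) (V : lmodType K).

Lemma pco_map (W : lmodType K) (f : V -> W) :
  f 0 = 0 -> forall p n, pco (map f p) n = f (pco p n).
Proof. by move=> f0; elim=> [|a p IH] [|n] //=; rewrite /pco /= ?f0. Qed.

Lemma psubst_widen (d : V -> V) p k N : d 0 = 0 -> (size p <= N)%N ->
  psubst d p k =
  \sum_(n < N) ('C(n, k)%:R * (-1) ^+ k) *: iter (n - k) (fun x => - d x) (pco p n).
Proof.
move=> d0 le_pN.
pose F n := ('C(n, k)%:R * (-1) ^+ k) *: iter (n - k) (fun x => - d x) (pco p n).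
rewrite /psubst (big_ord_widen N F le_pN) big_mkcond /=.
apply: eq_bigr => i _; case: ltnP => // le_pi.
have iter_oppd0 m : iter m (fun x => - d x) 0 = 0 by elim: m => //= m ->; rewrite d0 oppr0.
by rewrite /pco nth_default // iter_oppd0 scaler0.
Qed.

Lemma eq_psubst (d : V -> V) p1 p2 k : d 0 = 0 -> pco p1 =1 pco p2 ->
  psubst d p1 k = psubst d p2 k.
Proof.
move=> d0 eq_p; rewrite (@psubst_widen _ p1 _ (maxn (size p1) (size p2))) ?leq_maxl //.
rewrite (@psubst_widen _ p2 _ (maxn (size p1) (size p2))) ?leq_maxr //.
by apply: eq_bigr => i _; rewrite eq_p.
Qed.

Lemma dlinear_psubst (W : lmodType K) (dV : V -> V) (dW : W -> W) (f : V -> W) p k :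
  dlinear dV dW f -> f (psubst dV p k) = psubst dW (map f p) k.
Proof.
move=> f_dlin; rewrite /psubst size_map (big_morph f (dlinearD f_dlin) (dlinear0 f_dlin)).
apply: eq_bigr => i _.
by rewrite (dlinearZ f_dlin) (dlinear_iter_oppd f_dlin) (pco_map (dlinear0 f_dlin)).
Qed.

End Psubst.

Section LCA.
Variables (K : fieldType) (A : NLCA K).
Hypothesis A_LCA : is_LCA A.

Lemma der_dlinear : dlinear (@der _ A) (@der _ A) (@der _ A).
Proof. by case: A_LCA => derD [derZ _]. Qed.

Lemma lcDl (a a' b : A) n : lc (a + a') b n = lc a b n + lc a' b n.
Proof. by case: A_LCA => _ [_ []]. Qed.

Lemma lcDr (a b b' : A) n : lc a (b + b') n = lc a b n + lc a b' n.
Proof. by case: A_LCA => _ [_ [_ [_ []]]]. Qed.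

Lemma lc_skew (a b : A) n : lc a b n = - psubst (@der _ A) (brk b a) n.
Proof. by case: A_LCA => _ [_ [_ [_ [_ [_ [_ [_ []]]]]]]]. Qed.

End LCA.

Section Morphisms.
Variable K : fieldType.

Lemma nmorph_dlinear (A B : NLCA K) (f : A -> B) :
  nmorph f -> dlinear (@der _ A) (@der _ B) f.
Proof. by case. Qed.

Lemma nmorph_lc (A B : NLCA K) (f : A -> B) a b n :
  nmorph f -> f (lc a b n) = lc (f a) (f b) n.
Proof. by case=> _ ->. Qed.

Lemma nmorph_nij (A B : NLCA K) (f : A -> B) a : nmorph f -> f (nij a) = nij (f a).
Proof. by case. Qed.

Lemma nij_dlinear (A : NLCA K) :
  is_Nijenhuis A -> dlinear (@der _ A) (@der _ A) (@nij _ A).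
Proof. by case. Qed.

Lemma lc_morph_swap (A B : NLCA K) (f : A -> B) (a b : A) :
  is_LCA A -> is_LCA B -> dlinear (@der _ A) (@der _ B) f ->
  (forall n, f (lc a b n) = lc (f a) (f b) n) ->
  forall n, f (lc b a n) = lc (f b) (f a) n.
Proof.
move=> A_LCA B_LCA f_dlin f_lc n.
rewrite (lc_skew A_LCA) (lc_skew B_LCA) (dlinearN f_dlin) (dlinear_psubst _ _ f_dlin).
congr (- _); apply: eq_psubst => [|m]; first exact: dlinear0 (der_dlinear B_LCA).
by rewrite (pco_map (dlinear0 f_dlin)) f_lc.
Qed.

Lemma aut_inv_nmorph (A : NLCA K) (f fi : A -> A) : is_aut f fi -> nmorph fi.
Proof.
case=> f_morph fK fiK; have f_inj := can_inj fK.
split; first split.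
- by move=> x y; apply: f_inj; rewrite (dlinearD (nmorph_dlinear f_morph)) !fiK.
- by move=> k x; apply: f_inj; rewrite (dlinearZ (nmorph_dlinear f_morph)) !fiK.
- by move=> x; apply: f_inj; rewrite (dlinear_der (nmorph_dlinear f_morph)) !fiK.
- by move=> a b n; apply: f_inj; rewrite (nmorph_lc _ _ _ f_morph) !fiK.
- by move=> a; apply: f_inj; rewrite (nmorph_nij _ f_morph) !fiK.
Qed.

Lemma aut_nmorph (A : NLCA K) (f fi : A -> A) : is_aut f fi -> nmorph f.
Proof. by case. Qed.

Lemma autK (A : NLCA K) (f fi : A -> A) : is_aut f fi -> cancel f fi.
Proof. by case. Qed.

Lemma autKV (A : NLCA K) (f fi : A -> A) : is_aut f fi -> cancel fi f.
Proof. by case. Qed.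

End Morphisms.

Section Extension.
Variables (K : fieldType) (H E L : NLCA K) (inc : H -> E) (proj : E -> L) (s : L -> E).
Hypotheses (H_LCA : is_LCA H) (E_LCA : is_LCA E) (E_Nij : is_Nijenhuis E).
Hypotheses (inc_morph : nmorph inc) (proj_morph : nmorph proj).
Hypotheses (inc_inj : injective inc)
  (ker_proj : forall e : E, proj e = 0 <-> exists h : H, e = inc h).
Hypotheses (s_dlin : dlinear (@der _ L) (@der _ E) s) (projK : forall p, proj (s p) = p).

Let inc_dlin := nmorph_dlinear inc_morph.
Let proj_dlin := nmorph_dlinear proj_morph.

Lemma proj_inc h : proj (inc h) = 0.
Proof. by apply/ker_proj; exists h. Qed.

Lemma exists_hpart : exists hpart : E -> H, forall e, inc (hpart e) = e - s (proj e).
Proof.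
have hpart_ex e : exists h, inc h = e - s (proj e).
  have /ker_proj[h ->] : proj (e - s (proj e)) = 0.
    by rewrite (dlinearB proj_dlin) projK subrr.
  by exists h.
exists (fun e => proj1_sig (constructive_indefinite_description _ (hpart_ex e))).
by move=> e; case: constructive_indefinite_description.
Qed.

Variable hpart : E -> H.
Hypothesis inc_hpart : forall e, inc (hpart e) = e - s (proj e).

Lemma split_ext e : e = s (proj e) + inc (hpart e).
Proof. by rewrite inc_hpart addrC subrK. Qed.

Lemma eq_on_split (V : zmodType) (f1 f2 : E -> V) :
  (forall x y, f1 (x + y) = f1 x + f1 y) -> (forall x y, f2 (x + y) = f2 x + f2 y) ->
  (forall p, f1 (s p) = f2 (s p)) -> (forall h, f1 (inc h) = f2 (inc h)) -> f1 =1 f2.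
Proof. by move=> f1D f2D f_s f_inc e; rewrite (split_ext e) f1D f2D f_s f_inc. Qed.

Lemma hpart_dlinear : dlinear (@der _ E) (@der _ H) hpart.
Proof.
split=> [x y|k x|x]; apply: inc_inj; rewrite ?(dlinearD inc_dlin, dlinearZ inc_dlin,
  dlinear_der inc_dlin) !inc_hpart ?(dlinearD proj_dlin, dlinearZ proj_dlin,
  dlinear_der proj_dlin) ?(dlinearD s_dlin, dlinearZ s_dlin, dlinear_der s_dlin).
- by rewrite opprD addrACA.
- by rewrite scalerBr.
- by rewrite (dlinearB (der_dlinear E_LCA)).
Qed.

Lemma hpart_inc h : hpart (inc h) = h.
Proof. by apply: inc_inj; rewrite inc_hpart proj_inc (dlinear0 s_dlin) subr0. Qed.

Lemma hpart_s p : hpart (s p) = 0.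
Proof. by apply: inc_inj; rewrite inc_hpart projK subrr (dlinear0 inc_dlin). Qed.

Lemma proj_split p h : proj (s p + inc h) = p.
Proof. by rewrite (dlinearD proj_dlin) projK proj_inc addr0. Qed.

Lemma hpart_split p h : hpart (s p + inc h) = h.
Proof. by rewrite (dlinearD hpart_dlinear) hpart_s hpart_inc add0r. Qed.

Lemma lc_preserved_of_split (g : E -> E) : (forall x y, g (x + y) = g x + g y) ->
  (forall p q n, g (lc (s p) (s q) n) = lc (g (s p)) (g (s q)) n) ->
  (forall p h n, g (lc (s p) (inc h) n) = lc (g (s p)) (g (inc h)) n) ->
  (forall h p n, g (lc (inc h) (s p) n) = lc (g (inc h)) (g (s p)) n) ->
  (forall h h' n, g (lc (inc h) (inc h') n) = lc (g (inc h)) (g (inc h')) n) ->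
  forall a b n, g (lc a b n) = lc (g a) (g b) n.
Proof.
move=> gD g_ss g_si g_is g_ii a b n.
rewrite (split_ext a) (split_ext b) !(lcDl E_LCA, lcDr E_LCA) !gD.
by rewrite !(lcDl E_LCA, lcDr E_LCA) g_ss g_si g_is g_ii.
Qed.

Definition Pi_H (g : E -> E) h := hpart (g (inc h)).
Definition Pi_L (g : E -> E) p := proj (g (s p)).

Section PiComponents.
Variables g g' : E -> E.
Hypotheses (g_morph : nmorph g) (gK : cancel g g') (g'K : cancel g' g).
Hypotheses (g_incH : forall h, exists h', g (inc h) = inc h')
  (g_ontoH : forall h', exists h, g (inc h) = inc h').

Let g_dlin := nmorph_dlinear g_morph.
Let g'_morph : nmorph g' := aut_inv_nmorph (And3 g_morph gK g'K).

Lemma inc_Pi_H h : inc (Pi_H g h) = g (inc h).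
Proof. by rewrite /Pi_H; case: (g_incH h) => h0 ->; rewrite hpart_inc. Qed.

Lemma inc_Pi_H' h : inc (Pi_H g' h) = g' (inc h).
Proof. by rewrite /Pi_H; case: (g_ontoH h) => h0 <-; rewrite gK hpart_inc. Qed.

Lemma Pi_H_aut : is_aut (Pi_H g) (Pi_H g').
Proof.
split; first split; first split.
- by move=> x y; apply: inc_inj; rewrite !(dlinearD inc_dlin, inc_Pi_H) (dlinearD g_dlin).
- by move=> k x; apply: inc_inj; rewrite !(dlinearZ inc_dlin, inc_Pi_H) (dlinearZ g_dlin).
- by move=> x; apply: inc_inj; rewrite !(dlinear_der inc_dlin, inc_Pi_H) (dlinear_der g_dlin).
- move=> a b n; apply: inc_inj.
  by rewrite !(nmorph_lc _ _ _ inc_morph, inc_Pi_H) (nmorph_lc _ _ _ g_morph).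
- move=> a; apply: inc_inj.
  by rewrite !(nmorph_nij _ inc_morph, inc_Pi_H) (nmorph_nij _ g_morph).
- by move=> h; apply: inc_inj; rewrite inc_Pi_H' inc_Pi_H gK.
- by move=> h; apply: inc_inj; rewrite inc_Pi_H inc_Pi_H' g'K.
Qed.

Lemma Pi_L_proj (f : E -> E) e : nmorph f -> (forall h, proj (f (inc h)) = 0) ->
  Pi_L f (proj e) = proj (f e).
Proof.
move=> f_morph f_incH; rewrite /Pi_L {2}(split_ext e).
by rewrite (dlinearD (nmorph_dlinear f_morph)) (dlinearD proj_dlin) f_incH addr0.
Qed.

Lemma Pi_L_aut : is_aut (Pi_L g) (Pi_L g').
Proof.
have g_incH0 h : proj (g (inc h)) = 0 by rewrite -inc_Pi_H proj_inc.
have g'_incH0 h : proj (g' (inc h)) = 0 by rewrite -inc_Pi_H' proj_inc.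
split; first split.
- exact: dlinear_comp s_dlin (dlinear_comp g_dlin proj_dlin).
- move=> p q n; rewrite -{1}[p]projK -{1}[q]projK -(nmorph_lc _ _ _ proj_morph).
  by rewrite Pi_L_proj // !(nmorph_lc _ _ _ g_morph, nmorph_lc _ _ _ proj_morph).
- move=> p; rewrite -{1}[p]projK -(nmorph_nij _ proj_morph) Pi_L_proj //.
  by rewrite !(nmorph_nij _ g_morph, nmorph_nij _ proj_morph).
- move=> p; rewrite {2}/Pi_L Pi_L_proj ?gK ?projK //; exact: g'_morph.
- by move=> p; rewrite {2}/Pi_L Pi_L_proj ?g'K ?projK.
Qed.

End PiComponents.

Lemma Pi_aut g : AutH inc g -> exists alpha alphai beta betai,
  [/\ is_aut alpha alphai, is_aut beta betai & PiEq inc proj s g alpha beta].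
Proof.
case=> g_morph [g' gK g'K] g_incH g_ontoH.
exists (Pi_H g), (Pi_H g'), (Pi_L g), (Pi_L g'); split.
- exact: Pi_H_aut.
- exact: Pi_L_aut.
- by split=> // h; rewrite inc_Pi_H.
Qed.

Section Cocycle.
Variables (chi : L -> L -> seq H) (rho : L -> H -> seq H) (phi : L -> H).
Hypotheses
  (chi_def : forall p q n, inc (pco (chi p q) n) = lc (s p) (s q) n - s (lc p q n))
  (rho_def : forall p h n, inc (pco (rho p h) n) = lc (s p) (inc h) n)
  (phi_def : forall p, inc (phi p) = nij (s p) - s (nij p)).

Lemma nij_s p : nij (s p) = s (nij p) + inc (phi p).
Proof. by rewrite phi_def addrC subrK. Qed.

Lemma lc_inc_s h q n : lc (inc h) (s q) n = - inc (psubst (@der _ H) (rho q h) n).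
Proof.
rewrite (lc_skew E_LCA) (dlinear_psubst _ _ inc_dlin); congr (- _).
apply: eq_psubst => [|m]; first exact: dlinear0 (der_dlinear E_LCA).
by rewrite (pco_map (dlinear0 inc_dlin)) rho_def.
Qed.

Lemma lc_split p1 h1 p2 h2 n : lc (s p1 + inc h1) (s p2 + inc h2) n =
  s (lc p1 p2 n) + inc (pco (chi p1 p2) n + pco (rho p1 h2) n
                        - psubst (@der _ H) (rho p2 h1) n + lc h1 h2 n).
Proof.
rewrite !(lcDl E_LCA, lcDr E_LCA) lc_inc_s -(nmorph_lc _ _ _ inc_morph) -rho_def.
rewrite !(dlinearD inc_dlin, dlinearN inc_dlin) chi_def.
by rewrite !addrA [s _ + _]addrC addrK.
Qed.

Section Wells.
Variables (al ali : H -> H) (be bei : L -> L).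
Hypotheses (al_aut : is_aut al ali) (be_aut : is_aut be bei).

Let al_morph := aut_nmorph al_aut.
Let al_dlin := nmorph_dlinear al_morph.
Let alK := autK al_aut.
Let aliK := autKV al_aut.
Let be_morph := aut_nmorph be_aut.
Let be_dlin := nmorph_dlinear be_morph.
Let bei_morph := aut_inv_nmorph be_aut.
Let beK := autK be_aut.
Let beiK := autKV be_aut.

(* The transported cocycle (chi^(al,be), rho^(al,be), phi^(al,be)) of the Wells map. *)
Definition chi_ab p q := map al (chi (bei p) (bei q)).
Definition rho_ab p h := map al (rho (bei p) (ali h)).
Definition phi_ab p := al (phi (bei p)).

Section FromPi.
Variable g : E -> E.
Hypotheses (g_morph : nmorph g) (g_inc : forall h, g (inc h) = inc (al h))
  (g_s : forall p, proj (g (s p)) = be p).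

Let g_dlin := nmorph_dlinear g_morph.

Definition tau_of p := hpart (g (s (bei p))).

Lemma tau_of_dlinear : dlinear (@der _ L) (@der _ H) tau_of.
Proof.
apply: (dlinear_comp _ hpart_dlinear); apply: (dlinear_comp _ g_dlin).
exact: dlinear_comp (nmorph_dlinear bei_morph) s_dlin.
Qed.

Lemma g_s_bei p : g (s (bei p)) = s p + inc (tau_of p).
Proof. by rewrite [LHS]split_ext g_s beiK. Qed.

Lemma rho_ab_tau_of p h n : pco (rho_ab p h) n - pco (rho p h) n = lc (tau_of p) h n.
Proof.
rewrite /rho_ab (pco_map (dlinear0 al_dlin)); apply: inc_inj.
rewrite (dlinearB inc_dlin) -g_inc !rho_def (nmorph_lc _ _ _ g_morph) g_s_bei g_inc aliK.
by rewrite (lcDl E_LCA) (nmorph_lc _ _ _ inc_morph) addrAC subrr add0r.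
Qed.

Lemma chi_ab_tau_of p q n : pco (chi_ab p q) n - pco (chi p q) n =
  lc (tau_of p) (tau_of q) n - tau_of (lc p q n)
  + pco (rho p (tau_of q)) n - psubst (@der _ H) (rho q (tau_of p)) n.
Proof.
have al_chi : al (pco (chi (bei p) (bei q)) n) = pco (chi p q) n + pco (rho p (tau_of q)) n
    - psubst (@der _ H) (rho q (tau_of p)) n + lc (tau_of p) (tau_of q) n - tau_of (lc p q n).
  apply: inc_inj; rewrite -g_inc chi_def (dlinearB g_dlin) (nmorph_lc _ _ _ g_morph).
  rewrite !g_s_bei lc_split -(nmorph_lc _ _ _ bei_morph) g_s_bei.
  by rewrite [s _ + _]addrC addrKA (dlinearB inc_dlin).
rewrite /chi_ab (pco_map (dlinear0 al_dlin)) al_chi.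
by rewrite [LHS](ACl ((1*6)*4*5*2*3)) /= subrr add0r.
Qed.

Lemma phi_ab_tau_of p : phi_ab p - phi p = nij (tau_of p) - tau_of (nij p).
Proof.
have al_phi : al (phi (bei p)) = phi p + nij (tau_of p) - tau_of (nij p).
  apply: inc_inj; rewrite -g_inc phi_def (dlinearB g_dlin) (nmorph_nij _ g_morph).
  rewrite g_s_bei -(nmorph_nij _ bei_morph) g_s_bei (dlinearD (nij_dlinear E_Nij)) nij_s.
  rewrite -(nmorph_nij _ inc_morph) -[s _ + _ + _]addrA opprD addrACA subrr add0r.
  by rewrite !(dlinearD inc_dlin, dlinearN inc_dlin).
by rewrite /phi_ab al_phi addrC -addrA addKr.
Qed.

End FromPi.

Lemma nab_equiv_of_Pi g : nmorph g -> PiEq inc proj s g al be ->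
  nab_equiv chi_ab chi rho_ab rho phi_ab phi.
Proof.
move=> g_morph [g_inc g_s]; exists (tau_of g); split.
- exact: tau_of_dlinear.
- exact: rho_ab_tau_of.
- exact: chi_ab_tau_of.
- exact: phi_ab_tau_of.
Qed.

Section Lift.
Variable tau : L -> H.
Hypotheses (tau_dlin : dlinear (@der _ L) (@der _ H) tau)
  (rho_eq : forall p h n, pco (rho_ab p h) n - pco (rho p h) n = lc (tau p) h n)
  (chi_eq : forall p q n, pco (chi_ab p q) n - pco (chi p q) n =
      lc (tau p) (tau q) n - tau (lc p q n)
      + pco (rho p (tau q)) n - psubst (@der _ H) (rho q (tau p)) n)
  (phi_eq : forall p, phi_ab p - phi p = nij (tau p) - tau (nij p)).

Definition lift e := s (be (proj e)) + inc (tau (be (proj e)) + al (hpart e)).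
Definition lift_inv e := s (bei (proj e)) + inc (ali (hpart e - tau (proj e))).

Lemma lift_split p h : lift (s p + inc h) = s (be p) + inc (tau (be p) + al h).
Proof. by rewrite /lift proj_split hpart_split. Qed.

Lemma lift_s p : lift (s p) = s (be p) + inc (tau (be p)).
Proof. by rewrite /lift projK hpart_s (dlinear0 al_dlin) addr0. Qed.

Lemma lift_inc h : lift (inc h) = inc (al h).
Proof.
rewrite /lift proj_inc hpart_inc (dlinear0 be_dlin) (dlinear0 s_dlin) (dlinear0 tau_dlin).
by rewrite !add0r.
Qed.

Lemma lift_dlinear : dlinear (@der _ E) (@der _ E) lift.
Proof.
apply: dlinear_add; first exact: dlinearD (der_dlinear E_LCA).
  exact: dlinear_comp proj_dlin (dlinear_comp be_dlin s_dlin).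
apply: (dlinear_comp _ inc_dlin); apply: dlinear_add.
- exact: dlinearD (der_dlinear H_LCA).
- exact: dlinear_comp proj_dlin (dlinear_comp be_dlin tau_dlin).
- exact: dlinear_comp hpart_dlinear al_dlin.
Qed.

Lemma liftK : cancel lift lift_inv.
Proof.
move=> e; rewrite [e]split_ext lift_split /lift_inv proj_split hpart_split beK.
by rewrite [tau _ + _]addrC addrK alK.
Qed.

Lemma lift_invK : cancel lift_inv lift.
Proof.
by move=> e; rewrite [e]split_ext /lift_inv proj_split hpart_split lift_split beiK aliK subrKC.
Qed.

Lemma lift_lc_s_inc p h n : lift (lc (s p) (inc h) n) = lc (lift (s p)) (lift (inc h)) n.
Proof.
have al_rho : al (pco (rho p h) n) = pco (rho (be p) (al h)) n + lc (tau (be p)) (al h) n.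
  by rewrite -rho_eq /rho_ab beK alK (pco_map (dlinear0 al_dlin)) subrKC.
rewrite -rho_def !lift_inc lift_s (lcDl E_LCA) al_rho (dlinearD inc_dlin) rho_def.
by rewrite (nmorph_lc _ _ _ inc_morph).
Qed.

Lemma lift_lc_s_s p q n : lift (lc (s p) (s q) n) = lc (lift (s p)) (lift (s q)) n.
Proof.
have al_chi : al (pco (chi p q) n) = pco (chi (be p) (be q)) n
    + pco (rho (be p) (tau (be q))) n - psubst (@der _ H) (rho (be q) (tau (be p))) n
    + lc (tau (be p)) (tau (be q)) n - tau (lc (be p) (be q) n).
  move: (chi_eq (be p) (be q) n); rewrite /chi_ab !beK (pco_map (dlinear0 al_dlin)).
  by move/eqP; rewrite subr_eq => /eqP ->; rewrite [LHS](ACl (5*3*4*1*2)).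
rewrite !lift_s lc_split -[lc (s p) _ _](subrK (s (lc p q n))) -chi_def addrC lift_split.
by rewrite (nmorph_lc _ _ _ be_morph) al_chi subrKC.
Qed.

Lemma lift_lc a b n : lift (lc a b n) = lc (lift a) (lift b) n.
Proof.
apply: (lc_preserved_of_split (dlinearD lift_dlinear) lift_lc_s_s lift_lc_s_inc).
- by move=> h p; apply: lc_morph_swap E_LCA E_LCA lift_dlinear _ => m; apply: lift_lc_s_inc.
- move=> h h' m; rewrite -(nmorph_lc _ _ _ inc_morph) !lift_inc (nmorph_lc _ _ _ al_morph).
  by rewrite (nmorph_lc _ _ _ inc_morph).
Qed.

Lemma lift_nij e : lift (nij e) = nij (lift e).
Proof.
have nij_dlin := nij_dlinear E_Nij.
move: e; apply: eq_on_split => [x y|x y|p|h].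
- by rewrite (dlinearD nij_dlin) (dlinearD lift_dlinear).
- by rewrite (dlinearD lift_dlinear) (dlinearD nij_dlin).
- have al_phi : al (phi p) = phi (be p) + nij (tau (be p)) - tau (nij (be p)).
    move: (phi_eq (be p)); rewrite /phi_ab beK.
    by move/eqP; rewrite subr_eq => /eqP ->; rewrite addrC addrA.
  rewrite nij_s lift_split lift_s (dlinearD nij_dlin) nij_s -(nmorph_nij _ inc_morph).
  by rewrite (nmorph_nij _ be_morph) al_phi subrKC -addrA (dlinearD inc_dlin).
- rewrite -(nmorph_nij _ inc_morph) !lift_inc (nmorph_nij _ al_morph).
  by rewrite (nmorph_nij _ inc_morph).
Qed.

Lemma lift_AutH : AutH inc lift.
Proof.
split=> [|||h].
- by split; [exact: lift_dlinear | exact: lift_lc | exact: lift_nij].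
- by exists lift_inv; [exact: liftK | exact: lift_invK].
- by move=> h; exists (al h); rewrite lift_inc.
- by exists (ali h); rewrite lift_inc aliK.
Qed.

Lemma lift_PiEq : PiEq inc proj s lift al be.
Proof. by split=> [h|p]; rewrite ?lift_inc ?lift_s ?proj_split. Qed.

End Lift.

Lemma Pi_of_nab_equiv : nab_equiv chi_ab chi rho_ab rho phi_ab phi ->
  exists g, AutH inc g /\ PiEq inc proj s g al be.
Proof.
case=> tau [tau_dlin rho_eq chi_eq phi_eq]; exists (lift tau); split.
- exact: lift_AutH.
- exact: lift_PiEq.
Qed.

End Wells.
End Cocycle.
End Extension.

Theorem theorem6p6 (K : fieldType) (H E L : NLCA K)
    (inc : H -> E) (proj : E -> L) (s : L -> E)
    (chi : L -> L -> seq H) (rho : L -> H -> seq H) (phi : L -> H) :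
  (* the three Nijenhuis Lie conformal algebras *)
  is_NLCA H -> is_NLCA E -> is_NLCA L ->
  (* the short exact sequence 0 -> H_Q -> E_R -> L_N -> 0 of morphisms *)
  nmorph inc -> nmorph proj ->
  injective inc -> (forall x : L, exists e : E, proj e = x) ->
  (forall e : E, proj e = 0 <-> exists h : H, e = inc h) ->
  (* a C[∂]-linear section of proj *)
  dlinear (@der _ L) (@der _ E) s -> (forall p, proj (s p) = p) ->
  (* the induced χ, ρ, Φ (H-valued, read through the injection inc) *)
  (forall p q n, inc (pco (chi p q) n) = lc (s p) (s q) n - s (lc p q n)) ->
  (forall p h n, inc (pco (rho p h) n) = lc (s p) (inc h) n) ->
  (forall p, inc (phi p) = nij (s p) - s (nij p)) ->
  [/\ (* exactness at Aut^{L,H}_H(E_R): inc is the inclusion into Aut_H(E_R) *)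
      (forall g, AutLH inc proj s g -> AutH inc g),
      (* exactness at Aut_H(E_R): ker Π = Aut^{L,H}_H(E_R) *)
      (forall g, AutH inc g -> (PiEq inc proj s g id id <-> AutLH inc proj s g)),
      (* Π is well defined with values in Aut(H_Q) × Aut(L_N) *)
      (forall g, AutH inc g -> exists alpha alphai beta betai,
          [/\ is_aut alpha alphai, is_aut beta betai & PiEq inc proj s g alpha beta])
    & (* exactness at Aut(H_Q) × Aut(L_N): Im Π = {(α,β) | 𝔚(α,β) trivial} *)
      (forall (alpha alphai : H -> H) (beta betai : L -> L),
          is_aut alpha alphai -> is_aut beta betai ->
          ((exists g, AutH inc g /\ PiEq inc proj s g alpha beta) <->
           nab_equiv
             (fun p q => map alpha (chi (betai p) (betai q)))
             chi
             (fun p h => map alpha (rho (betai p) (alphai h)))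
             rho
             (fun p => alpha (phi (betai p)))
             phi))].
Proof.
move=> [H_LCA _] [E_LCA E_Nij] _ inc_morph proj_morph inc_inj _ ker_proj s_dlin projK.
move=> chi_def rho_def phi_def.
have [hpart inc_hpart] := exists_hpart proj_morph ker_proj projK.
split=> [g [] // | g g_aut | g g_aut | al ali be bei al_aut be_aut].
- by split=> [g_Pi | []].
- exact: (Pi_aut inc_morph proj_morph inc_inj ker_proj s_dlin projK inc_hpart g_aut).
split=> [[g [[g_morph _ _ _] g_Pi]] |].
- exact: (nab_equiv_of_Pi E_LCA E_Nij inc_morph proj_morph inc_inj s_dlin inc_hpart
    chi_def rho_def phi_def al_aut be_aut g_morph g_Pi).
- exact: (Pi_of_nab_equiv H_LCA E_LCA E_Nij inc_morph proj_morph inc_inj ker_proj s_dlin projK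
    inc_hpart chi_def rho_def phi_def al_aut be_aut).
Qed.
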